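(* Let $G$ be a profinite group whose set of coprime commutators has cardinality less than $2^{\aleph_0}$. Let $x\in G$ and let $H$ be a (closed) subgroup of $G$ such that $\pi(x)\cap\pi(H)=\emptyset$. Then the centralizer $C_H(x)$ has finite index in $H$.
   Context: For an element $x$ of a profinite group, $\pi(x)$ denotes the set of primes dividing the order of the procyclic subgroup $\overline{\langle x\rangle}$; for a profinite group $H$, $\pi(H)$ is the set of primes dividing its order (a Steinitz number). A coprime commutator in a profinite group $G$ is an element $[x,y]$ with $x,y\in G$ and $\pi(x)\cap\pi(y)=\emptyset$. *)

From mathcomp Require Import all_boot all_order.
From mathcomp Require Import classical_sets boolp cardinality.
From mathcomp Require Import topology.
Set Implicit Arguments. Unset Strict Implicit. Unset Printing Implicit Defensive.
Local Open Scope classical_set_scope.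

Section ProfiniteDefs.
Variables (G : topologicalType) (mul : G -> G -> G) (inv : G -> G) (one : G).

Definition group_axioms :=
  [/\ forall x y z, mul x (mul y z) = mul (mul x y) z,
      forall x, mul one x = x,
      forall x, mul x one = x,
      forall x, mul (inv x) x = one &
      forall x, mul x (inv x) = one].

Definition is_profinite_group :=
  [/\ group_axioms,
      continuous (fun p : G * G => mul p.1 p.2) /\ continuous inv,
      compact [set: G],
      hausdorff_space G &
      totally_disconnected [set: G]].

Definition is_subgroup (H : set G) :=
  [/\ H one, forall x y, H x -> H y -> H (mul x y) & forall x, H x -> H (inv x)].

Definition closed_subgroup (H : set G) := is_subgroup H /\ closed H.

Definition normal_sub (U H : set G) :=
  [/\ is_subgroup U, U `<=` H & forall h u, H h -> U u -> U (mul (inv h) (mul u h))].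

(* U is a subgroup of H with [H : U] = n : the left cosets (nth one s i) U,
   i < size s, partition H. *)
Definition index_is (H U : set G) (n : nat) :=
  exists s : seq G, size s = n /\ (forall i, (i < size s)%N -> H (nth one s i)) /\
    forall h, H h -> exists! i : nat, (i < size s)%N /\ U (mul (inv (nth one s i)) h).

Definition finite_index (H U : set G) := exists n, index_is H U n.

(* pi(H) for a closed subgroup H: the primes dividing the Steinitz number |H|,
   i.e. the primes dividing [H : U] for some open normal subgroup U of H
   (open in the subspace topology of H). *)
Definition pi_set (H : set G) (p : nat) :=
  prime p /\ exists U : set G, [/\ exists O : set G, open O /\ U = H `&` O,
     normal_sub U H & exists n, index_is H U n /\ (p %| n)%N].

Definition cyc (x : G) : set G :=
  [set z | exists n : nat, z = iter n (mul x) one \/ z = inv (iter n (mul x) one)].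

Definition pi_elt (x : G) (p : nat) := pi_set (closure (cyc x)) p.

Definition comm (x y : G) := mul (inv x) (mul (inv y) (mul x y)).

Definition coprime_commutators : set G :=
  [set z | exists x y, (forall p, ~ (pi_elt x p /\ pi_elt y p)) /\ z = comm x y].

Definition centralizer_in (H : set G) (x : G) : set G :=
  [set h | H h /\ mul h x = mul x h].

End ProfiniteDefs.

From HB Require Import structures.
From mathcomp Require Import all_boot all_order finmap.
From mathcomp Require Import classical_sets boolp cardinality.
From mathcomp Require Import topology.
Set Implicit Arguments. Unset Strict Implicit. Unset Printing Implicit Defensive.
Local Open Scope classical_set_scope.
Local Open Scope card_scope.

(* The map f : h |-> [h^-1, x] is continuous, and on H its values are coprime
   commutators, because pi(h) is contained in pi(H) for every h in H.  Its image
   f(H) is compact; a compact set without isolated points has at least the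
   cardinality of the continuum, so some value f(h0) is isolated in f(H).  By
   compactness H is covered by finitely many sets r U, with r in H and U an
   open neighbourhood of one such that f(h0 U) stays near f(h0); then
   f(h0 r^-1 h) = f(h0) for h in r U, i.e. r^-1 h centralizes x.  Hence
   finitely many left cosets of C_H(x) cover H. *)

Lemma compact_directed_meet (T : topologicalType) (K : set T) (I : Type)
    (D : set I) (B : I -> set T) :
  compact K -> (exists i, D i) ->
  (forall i j, D i -> D j -> exists2 k, D k & B k `<=` B i `&` B j) ->
  (forall i, D i -> [/\ closed (B i), B i `<=` K & B i !=set0]) ->
  exists x, forall i, D i -> B i x.
Proof.
move=> cK [i0 Di0] dir hB.
have FF : ProperFilter (filter_from D B).
  apply: filter_from_proper; first by apply: filter_from_filter => //; exists i0.
  by move=> i /hB [].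
have [|p [Kp clp]] := cK _ FF.
  by exists i0 => //; have [] := hB _ Di0.
exists p => i Di; have [cl _ _] := hB _ Di.
rewrite clusterE in clp; apply: cl; apply: clp; exists i => //.
Qed.

Lemma compact_separate_closed (T : topologicalType) (A1 A2 : set T) :
  compact [set: T] -> hausdorff_space T -> closed A1 -> closed A2 ->
  (forall z, A1 z -> A2 z -> False) ->
  exists U1 U2, [/\ open U1, open U2, A1 `<=` U1, A2 `<=` U2 &
                    forall z, U1 z -> U2 z -> False].
Proof.
move=> cT hT cA1 cA2 dis.
have [C nC clC] : filter_from (set_nbhs A1) closure (~` A2).
  apply: (compact_normal hT cT cA1); apply/set_nbhsP; exists (~` A2); split.
  - exact: closed_openC.
  - by move=> z h1 h2; exact: dis z h1 h2.
  - by [].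
exists C°, (~` closure C); split.
- exact: open_interior.
- exact/closed_openC/closed_closure.
- by move=> z /nC.
- by move=> z h2 hc; exact: clC z hc h2.
- by move=> z /interior_subset /subset_closure h1; apply.
Qed.

Lemma compact_shrink_nbhs (T : topologicalType) (z : T) (U : set T) :
  compact [set: T] -> hausdorff_space T -> nbhs z U ->
  exists V, [/\ open V, V z & closure V `<=` U].
Proof.
move=> cT hT nU; have nT : nbhs z setT by apply: filterT.
have [V nV cVU] := @compact_regular T z setT hT cT nT U nU.
exists V°; split; [exact: open_interior | exact: nV |].
by apply: subset_trans cVU; apply: closureS; exact: interior_subset.
Qed.

(* The quasi-component of a point x0 (the intersection of all clopen sets
   containing x0) of a compact Hausdorff space is connected; when the space is
   totally disconnected it is therefore {x0}, which gives small clopen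
   neighbourhoods of x0. *)
Section QuasiComponent.
Variable T : topologicalType.
Hypotheses (cT : compact [set: T]) (hT : hausdorff_space T).
Variable x0 : T.

Let clopen_nbhd := [set W : set T | clopen W /\ W x0].
Let quasi := \bigcap_(W in clopen_nbhd) W.

Let quasi_x0 : quasi x0. Proof. by move=> W []. Qed.

Lemma quasi_component_sub_open (O : set T) :
  open O -> quasi `<=` O -> exists W, clopen_nbhd W /\ W `<=` O.
Proof.
move=> oO QO; apply: contrapT => nW.
have [|||y hy] := @compact_directed_meet T setT (set T) clopen_nbhd
    (fun W => W `&` ~` O) cT.
- by exists setT; split => //; split; [exact: openT | exact: closedT].
- move=> W1 W2 [[o1 c1] h1] [[o2 c2] h2]; exists (W1 `&` W2).
    by split; [split; [exact: openI | exact: closedI] | split].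
  by move=> z [[? ?] ?]; split; split.
- move=> W [[oW cW] hW]; split => //.
    by apply: closedI => //; exact: open_closedC.
  apply: contrapT => /set0P/negP; rewrite negbK => /eqP e.
  apply: nW; exists W; split => //; move=> z Wz; apply: contrapT => nO.
  by have : (W `&` ~` O) z by []; rewrite e.
have Qy : quasi y by move=> W /hy [].
have : clopen_nbhd setT by split => //; split; [exact: openT | exact: closedT].
by move=> /hy [_]; apply; exact: QO.
Qed.

Lemma quasi_component_closed : closed quasi.
Proof. by apply: closed_bigI => W [[]]. Qed.

Lemma quasi_component_in_half (A1 A2 : set T) : closed A1 -> closed A2 ->
  (forall z, A1 z -> A2 z -> False) -> quasi `<=` A1 `|` A2 -> A1 x0 ->
  quasi `<=` A1.
Proof.
move=> cA1 cA2 dis QA A1x.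
have [U1 [U2 [oU1 oU2 AU1 AU2 dU]]] := compact_separate_closed cT hT cA1 cA2 dis.
have [W [[[oW cW] Wx] WU]] :=
  quasi_component_sub_open (openU oU1 oU2) (subset_trans QA (setUSS AU1 AU2)).
have CLW : clopen_nbhd (W `&` U1).
  split; last by split => //; exact: AU1.
  split; first exact: openI.
  have -> : W `&` U1 = W `&` ~` U2.
    apply/seteqP; split => z [Wz hz]; split => //.
      by move=> h; exact: dU z hz h.
    by have [] := WU z Wz.
  by apply: closedI => //; exact: open_closedC.
move=> q Qq; have [_ U1q] := Qq _ CLW.
by case: (QA q Qq) => // /AU2 U2q; case: (dU q U1q U2q).
Qed.

Lemma quasi_component_connected : connected quasi.
Proof.
move=> B [b Bb] [C1 oC1 eB1] [C2 cC2 eB2].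
have cA1 : closed (quasi `&` C2).
  by apply: closedI => //; exact: quasi_component_closed.
have cA2 : closed (quasi `&` ~` C1).
  by apply: closedI; [exact: quasi_component_closed | exact: open_closedC].
have dis : forall z, (quasi `&` C2) z -> (quasi `&` ~` C1) z -> False.
  by move=> z h1 [_ nz]; move: h1; rewrite -eB2 eB1 => -[].
have cov : quasi `<=` (quasi `&` C2) `|` (quasi `&` ~` C1).
  move=> q Qq; have [C1q|nC1q] := pselect (C1 q); [left | by right].
  by rewrite -eB2 eB1.
have [C1x|nC1x] := pselect (C1 x0).
  apply/seteqP; split; first by rewrite eB1 => z [].
  by rewrite eB2; apply: (quasi_component_in_half cA1 cA2 dis cov); rewrite -eB2 eB1.
have QB : quasi `<=` quasi `&` ~` C1.
  apply: (quasi_component_in_half cA2 cA1 _ _ (conj quasi_x0 nC1x)).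
  - by move=> z h2 h1; exact: dis z h1 h2.
  - by rewrite setUC.
by move: Bb; rewrite eB1 => -[Qb C1b]; have [] := QB b Qb.
Qed.

Lemma clopen_nbhs_sub (O : set T) : totally_disconnected [set: T] ->
  open O -> O x0 -> exists W, [/\ clopen W, W x0 & W `<=` O].
Proof.
move=> td oO Ox.
have Q1 : quasi `<=` [set x0].
  rewrite -(td x0 I) => q Qq; exists quasi => //; split => //.
  exact: quasi_component_connected.
have [|W [[cW Wx] WO]] := quasi_component_sub_open oO; first by move=> q /Q1 ->.
by exists W.
Qed.
End QuasiComponent.

(* A nonempty compact subset of a compact Hausdorff space without isolated
   points has at least the cardinality of the continuum: a Cantor scheme of
   nested open cells assigns distinct points to distinct branches. *)
Section CantorScheme.
Variables (T : topologicalType) (S : set T).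
Hypotheses (cT : compact [set: T]) (hT : hausdorff_space T) (cS : compact S).
Hypothesis perfS : S `<=` limit_point S.

Definition marked_cell (p : set T * T) := [/\ open p.1, S p.2 & p.1 p.2].

Lemma marked_cell_split p : marked_cell p -> exists q : bool -> set T * T,
  [/\ forall i, marked_cell (q i), forall i, closure (q i).1 `<=` p.1 &
      forall y, (q true).1 y -> (q false).1 y -> False].
Proof.
case: p => W z [/= oW Sz Wz].
have [z' [nz Sz' Wz']] := perfS Sz (open_nbhs_nbhs (conj oW Wz)).
rewrite eq_sym in nz; have hsep := hT; rewrite open_hausdorff in hsep.
have [[A B] /= [zA z'B] [oA oB AB0]] := hsep _ _ nz.
rewrite inE in zA; rewrite inE in z'B.
have [V0 [oV0 V0z cV0]] := compact_shrink_nbhs cT hT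
  (open_nbhs_nbhs (conj (openI oW oA) (conj Wz zA))).
have [V1 [oV1 V1z cV1]] := compact_shrink_nbhs cT hT
  (open_nbhs_nbhs (conj (openI oW oB) (conj Wz' z'B))).
exists (fun i => if i then (V0, z) else (V1, z')); split.
- by case; split.
- by case => y /= /[dup] h; [move/cV0 => [] | move/cV1 => []].
- move=> y /= /subset_closure /cV0 [_ hA] /subset_closure /cV1 [_ hB].
  have : (A `&` B) y by split.
  by move/eqP: AB0 => ->.
Qed.

Section Branches.
Variable split : set T * T -> bool -> set T * T.
Hypothesis split_cell : forall p, marked_cell p ->
  [/\ forall i, marked_cell (split p i), forall i, closure (split p i).1 `<=` p.1 &
      forall y, (split p true).1 y -> (split p false).1 y -> False].
Variable z0 : T.
Hypothesis Sz0 : S z0.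

Fixpoint branch (b : nat -> bool) (n : nat) : set T * T :=
  if n is m.+1 then split (branch b m) (b m) else (setT, z0).

Lemma branch_cell b n : marked_cell (branch b n).
Proof.
elim: n => [|n IH] /=; first by split => //; exact: openT.
by have [h _ _] := split_cell IH.
Qed.

Lemma branch_closure b n : closure (branch b n.+1).1 `<=` (branch b n).1.
Proof. by have [_ h _] := split_cell (branch_cell b n); exact: h. Qed.

Lemma branch_mono b n m : n <= m -> (branch b m).1 `<=` (branch b n).1.
Proof.
move=> /subnK <-; elim: (m - n) => [|k IH] //.
rewrite addSn; exact: subset_trans (subset_trans (@subset_closure _ _) (@branch_closure b (k + n))) IH.
Qed.

Lemma branch_limit b : exists y, S y /\ forall n, (branch b n).1 y.
Proof.
have [|||y hy] := @compact_directed_meet T S nat setT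
    (fun n => S `&` closure (branch b n).1) cS.
- by exists 0.
- move=> i j _ _; exists (maxn i j) => // y [Sy hy]; split; split => //.
    exact: (closureS (@branch_mono b i _ (leq_maxl i j))).
  exact: (closureS (@branch_mono b j _ (leq_maxr i j))).
- move=> n _; have [_ Sz Wz] := branch_cell b n; split.
  + exact: closedI (compact_closed hT cS) (@closed_closure _ _).
  + by move=> y [].
  + by exists (branch b n).2; split => //; exact: subset_closure.
exists y; split; first by have [] := hy 0 I.
by move=> n; have [_ h] := hy n.+1 I; exact: branch_closure.
Qed.

Lemma branch_prefix b b' n :
  (forall k, k < n -> b k = b' k) -> branch b n = branch b' n.
Proof.
elim: n => [|n IH] eqb //=.
rewrite IH => [|k kn]; last by apply: eqb; exact: leqW.
by rewrite eqb.
Qed.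

Lemma branch_sep b b' y : (forall n, (branch b n).1 y) ->
  (forall n, (branch b' n).1 y) -> b = b'.
Proof.
move=> yb yb'; apply: funext => n; elim/ltn_ind: n => n IH.
have [_ _ sep] := split_cell (branch_cell b n).
move: (yb n.+1) (yb' n.+1) => /=; rewrite -(branch_prefix IH).
case: (b n); case: (b' n) => //= h1 h2; exfalso.
- exact: sep _ h1 h2.
- exact: sep _ h2 h1.
Qed.
End Branches.

Lemma perfect_card : S !=set0 -> [set: nat -> bool] #<= S.
Proof.
case=> z0 Sz0.
have /choice [split split_cell] : forall p, exists q : bool -> set T * T,
  marked_cell p -> [/\ forall i, marked_cell (q i), forall i, closure (q i).1 `<=` p.1 &
                       forall y, (q true).1 y -> (q false).1 y -> False].
  move=> p; have [/marked_cell_split [q hq]|np] := pselect (marked_cell p).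
    by exists q.
  by exists (fun _ => p).
have /choice [phi hphi] := branch_limit split_cell Sz0.
have phi_inj : {in [set: nat -> bool] &, injective phi}.
  move=> b b' _ _ e; apply: (branch_sep split_cell Sz0 (hphi b).2).
  by rewrite e; exact: (hphi b').2.
have [_ /card_le_trans] := (card_eqPle _ _).1 (inj_card_eq phi_inj); apply.
by apply: subset_card_le => y [b _ <-]; have [] := hphi b.
Qed.
End CantorScheme.

Section ProfiniteGroup.
Variables (G : topologicalType) (mul : G -> G -> G) (inv : G -> G) (one : G).
Hypothesis hG : is_profinite_group mul inv one.

Let hax : group_axioms mul inv one. Proof. by case: hG. Qed.

Lemma mulA x y z : mul x (mul y z) = mul (mul x y) z. Proof. by case: hax. Qed.
Lemma mul1g x : mul one x = x. Proof. by case: hax. Qed.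
Lemma mulg1 x : mul x one = x. Proof. by case: hax. Qed.
Lemma mulVg x : mul (inv x) x = one. Proof. by case: hax. Qed.
Lemma mulgV x : mul x (inv x) = one. Proof. by case: hax. Qed.
Lemma mulKg x y : mul (inv x) (mul x y) = y. Proof. by rewrite mulA mulVg mul1g. Qed.
Lemma mulKVg x y : mul x (mul (inv x) y) = y. Proof. by rewrite mulA mulgV mul1g. Qed.
Lemma mulgK x y : mul (mul y x) (inv x) = y. Proof. by rewrite -mulA mulgV mulg1. Qed.
Lemma mulgKV x y : mul (mul y (inv x)) x = y. Proof. by rewrite -mulA mulVg mulg1. Qed.
Lemma mulgI x y z : mul x y = mul x z -> y = z.
Proof. by move=> e; rewrite -(mulKg x y) e mulKg. Qed.
Lemma mulIg x y z : mul y x = mul z x -> y = z.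
Proof. by move=> e; rewrite -(mulgK x y) e mulgK. Qed.
Lemma invK x : inv (inv x) = x.
Proof. by apply: (@mulgI (inv x)); rewrite mulgV mulVg. Qed.
Lemma invM x y : inv (mul x y) = mul (inv y) (inv x).
Proof.
by apply: (@mulgI (mul x y)); rewrite mulgV -mulA (mulA y) mulgV mul1g mulgV.
Qed.
Lemma inv1 : inv one = one.
Proof. by rewrite -{2}(mulVg one) mulg1. Qed.

Local Notation subgroup := (is_subgroup mul inv one).
Local Notation idx := (index_is mul inv one).
Local Notation fin_index := (finite_index mul inv one).

Section Subgroup.
Variable C : set G.
Hypothesis hC : subgroup C.

Lemma sub1 : C one. Proof. by case: hC. Qed.
Lemma subM a b : C a -> C b -> C (mul a b). Proof. by case: hC => _ h _; exact: h. Qed.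
Lemma subV a : C a -> C (inv a). Proof. by case: hC => _ _ h; exact: h. Qed.
Lemma subMV a b : C (mul a b) -> C b -> C a.
Proof. by move=> h1 h2; rewrite -(mulgK b a); apply: subM => //; exact: subV. Qed.
Lemma subVM a b : C (mul a b) -> C a -> C b.
Proof. by move=> h1 h2; rewrite -(mulKg a b); apply: subM => //; exact: subV. Qed.

Definition same_lcoset a b := C (mul (inv a) b).

Lemma same_lcoset_refl a : same_lcoset a a.
Proof. by rewrite /same_lcoset mulVg; exact: sub1. Qed.
Lemma same_lcoset_sym a b : same_lcoset a b -> same_lcoset b a.
Proof. by rewrite /same_lcoset => /subV; rewrite invM invK. Qed.
Lemma same_lcoset_trans a b c : same_lcoset a b -> same_lcoset b c -> same_lcoset a c.
Proof. by rewrite /same_lcoset => h1 h2; have := subM h1 h2; rewrite -mulA mulKVg. Qed.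
End Subgroup.

Lemma subgroupI A B : subgroup A -> subgroup B -> subgroup (A `&` B).
Proof.
move=> hA hB; split; first by split; exact: sub1.
- by move=> a b [? ?] [? ?]; split; exact: subM.
- by move=> a [? ?]; split; exact: subV.
Qed.

Lemma index_pos_unique A C s h i j :
  (forall h, A h -> exists! i : nat, i < size s /\ C (mul (inv (nth one s i)) h)) ->
  A h -> i < size s -> j < size s -> C (mul (inv (nth one s i)) h) ->
  C (mul (inv (nth one s j)) h) -> i = j.
Proof.
move=> su Ah hi hj ci cj; have [k [_ ku]] := su h Ah.
by rewrite -(ku i (conj hi ci)) -(ku j (conj hj cj)).
Qed.

Lemma lcoset_reps C (hC : subgroup C) (s : seq G) : exists r : seq G,
  [/\ forall i, i < size r -> exists j, j < size s /\ nth one r i = nth one s j,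
      forall i j, i < size r -> j < size r ->
        same_lcoset C (nth one r i) (nth one r j) -> i = j &
      forall j, j < size s ->
        exists i, i < size r /\ same_lcoset C (nth one r i) (nth one s j)].
Proof.
elim: s => [|x s [r [h1 h2 h3]]]; first by exists [::]; split.
have [[i0 [i0r P]]|nP] :=
  pselect (exists i, i < size r /\ same_lcoset C (nth one r i) x).
  exists r; split => //; first by move=> i /h1 [j [js ->]]; exists j.+1.
  by case=> [_|j /h3 [i [? ?]]]; [exists i0 | exists i].
exists (x :: r); split.
- by case=> [_|i /h1 [j [? ?]]]; [exists 0 | exists j.+1].
- case=> [|i] [|j] //=; rewrite !ltnS => hi hj.
  + by move=> h; exfalso; apply: nP; exists j; split => //; exact: same_lcoset_sym.
  + by move=> h; exfalso; apply: nP; exists i.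
  + by move=> /h2 ->.
- case=> [_|j /h3 [i [? ?]]]; first by exists 0; split => //; exact: same_lcoset_refl.
  by exists i.+1.
Qed.

Lemma finite_index_cover_seq A C (s : seq G) : subgroup C ->
  (forall i, i < size s -> A (nth one s i)) ->
  (forall h, A h -> exists i, i < size s /\ C (mul (inv (nth one s i)) h)) ->
  fin_index A C.
Proof.
move=> hC sA cov; have [r [h1 h2 h3]] := lcoset_reps hC s.
exists (size r), r; split => //; split; first by move=> i /h1 [j [js ->]]; exact: sA.
move=> h Ah; have [j [js hj]] := cov h Ah; have [i [ir hi]] := h3 j js.
exists i; split; first by split => //; exact: (same_lcoset_trans hC hi).
move=> k [kr hk]; apply: h2 => //; apply: (same_lcoset_trans hC hi).
by apply: (same_lcoset_trans hC hj); exact: same_lcoset_sym.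
Qed.

Lemma finite_index_cover (I : finType) (e : I -> G) A C : subgroup C ->
  (forall i, A (e i)) -> (forall h, A h -> exists i, C (mul (inv (e i)) h)) ->
  fin_index A C.
Proof.
move=> hC eA cov; apply: (@finite_index_cover_seq A C [seq e i | i <- enum I]) => //.
  move=> i; rewrite size_map => hi.
  have [x _] : exists x : I, true by move: hi; case: (enum I) => // x; exists x.
  by rewrite (nth_map x) //; exact: eA.
move=> h /cov [i hi]; exists (index i (enum I)).
rewrite size_map index_mem mem_enum; split => //.
by rewrite (nth_map i) ?index_mem ?mem_enum // nth_index ?mem_enum.
Qed.

Lemma index_transversal_card (I : finType) (e : I -> G) A C c : subgroup C ->
  (forall i, A (e i)) -> (forall h, A h -> exists i, C (mul (inv (e i)) h)) ->
  (forall i j, same_lcoset C (e i) (e j) -> i = j) ->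
  idx A C c -> c = #|I|.
Proof.
move=> hC eA cov eu [s [sc [sA su]]].
have /choice [f hf] : forall i : I, exists j : 'I_c, C (mul (inv (nth one s j)) (e i)).
  move=> i; have [j [[js hj] _]] := su _ (eA i).
  have jc : j < c by rewrite -sc.
  by exists (Ordinal jc).
have /choice [g hg] : forall j : 'I_c, exists i : I, C (mul (inv (e i)) (nth one s j)).
  by move=> j; apply: cov; apply: sA; rewrite sc.
have f_inj : injective f.
  move=> i i' ee; apply: eu; have r1 := hf i; have r2 := hf i'; rewrite -ee in r2.
  exact: (same_lcoset_trans hC (same_lcoset_sym hC r1) r2).
have g_inj : injective g.
  move=> j j' ee; apply: val_inj => /=.
  have hj : j < size s by rewrite sc.
  have hj' : j' < size s by rewrite sc.
  have r1 := hg j; have r2 := hg j'; rewrite -ee in r2.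
  apply: (@index_pos_unique A C s (nth one s j') j j') => //; first exact: sA.
    exact: (same_lcoset_trans hC (same_lcoset_sym hC r1) r2).
  exact: same_lcoset_refl.
have := leq_card f f_inj; have := leq_card g g_inj; rewrite !card_ord => h1 h2.
by apply/eqP; rewrite eqn_leq h1 h2.
Qed.

Lemma index_unique A C n m : subgroup C -> idx A C n -> idx A C m -> n = m.
Proof.
move=> hC [s [sn [sA su]]] idxm.
have lt (i : 'I_n) : i < size s by rewrite sn.
suff -> : m = #|'I_n| by rewrite card_ord.
apply: (@index_transversal_card _ (fun i : 'I_n => nth one s i) A C m hC) => //.
- by move=> i; exact: sA.
- move=> h Ah; have [i [[si hi] _]] := su h Ah.
  have i_n : i < n by rewrite -sn.
  by exists (Ordinal i_n).
- move=> i j hij; apply: val_inj.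
  apply: (index_pos_unique su (sA _ (lt j)) (lt i) (lt j) hij).
  exact: same_lcoset_refl.
Qed.

Lemma index_mul A B C a b :
  subgroup A -> subgroup B -> subgroup C -> C `<=` B -> B `<=` A ->
  idx A B a -> idx B C b -> idx A C (a * b).
Proof.
move=> hA hB hC CB BA [s [sa [sA su]]] [t [tb [tB tu]]].
pose e (p : 'I_a * 'I_b) := mul (nth one s p.1) (nth one t p.2).
have eA : forall p, A (e p).
  move=> [i k]; apply: subM => //; first by apply: sA; rewrite sa.
  by apply: BA; apply: tB; rewrite tb.
have cov : forall h, A h -> exists p, C (mul (inv (e p)) h).
  move=> h Ah; have [i [[si hi] _]] := su h Ah; have [k [[tk hk] _]] := tu _ hi.
  have ia : i < a by rewrite -sa.
  have kb : k < b by rewrite -tb.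
  by exists (Ordinal ia, Ordinal kb); rewrite /e /= invM -mulA.
have [c hc] := finite_index_cover hC eA cov.
suff einj : forall i j, same_lcoset C (e i) (e j) -> i = j.
  by rewrite -(card_ord a) -(card_ord b) -card_prod -(index_transversal_card hC eA cov einj hc).
move=> [i k] [j l]; rewrite /same_lcoset /e /= invM -!mulA => h.
have hi : i < size s by rewrite sa.
have hj : j < size s by rewrite sa.
have hk : k < size t by rewrite tb.
have hl : l < size t by rewrite tb.
have Bij : B (mul (inv (nth one s i)) (nth one s j)).
  have h1 : B (mul (mul (inv (nth one t k))
      (mul (inv (nth one s i)) (nth one s j))) (nth one t l)).
    by rewrite -!mulA; exact: CB.
  have h2 := subMV hB h1 (tB _ hl).
  by have := subVM hB h2 (subV hB (tB _ hk)).
have ij : i = j.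
  apply: val_inj; apply: (index_pos_unique su (sA _ hj) hi hj Bij).
  exact: same_lcoset_refl.
rewrite ij mulKg in h; rewrite ij; congr pair; apply: val_inj.
apply: (index_pos_unique tu (tB _ hl) hk hl h); exact: same_lcoset_refl.
Qed.

Lemma finite_index_restrict A B C :
  subgroup B -> subgroup C -> B `<=` A -> fin_index A C -> fin_index B (B `&` C).
Proof.
move=> hB hC BA [c [s [sc [sA su]]]].
have /choice [g hg] : forall i : 'I_c, exists y, B y /\
    ((exists y', B y' /\ C (mul (inv (nth one s i)) y')) ->
     C (mul (inv (nth one s i)) y)).
  move=> i; have [[y' [By' Cy']]|nE] :=
    pselect (exists y', B y' /\ C (mul (inv (nth one s i)) y')).
    by exists y'.
  by exists one; split; [exact: sub1 | move=> /nE].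
apply: (@finite_index_cover _ g); first exact: subgroupI.
  by move=> i; case: (hg i).
move=> h Bh; have [i [[si hi] _]] := su h (BA _ Bh).
have ic : i < c by rewrite -sc.
exists (Ordinal ic); have [Bg Cg] := hg (Ordinal ic).
have Cg' := Cg (ex_intro _ h (conj Bh hi)).
split; first by apply: subM => //; exact: subV.
exact: (same_lcoset_trans hC (same_lcoset_sym hC Cg') hi).
Qed.

(* The product set K D = {k d | k in K, d in D}. *)
Definition prodset (K D : set G) := [set g | exists k, K k /\ D (mul (inv k) g)].

Lemma index_prodset K D b : subgroup K -> subgroup D ->
  idx K (K `&` D) b -> idx (prodset K D) D b.
Proof.
move=> hK hD [t [tb [tK tu]]]; exists t; split => //; split.
  by move=> i hi; exists (nth one t i); split; [exact: tK | rewrite mulVg; exact: sub1].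
move=> g [k [Kk Dk]]; have [i [[ti [Ki Di]] iu]] := tu k Kk.
exists i; split.
  by split => //; have := subM hD Di Dk; rewrite -mulA mulKVg.
move=> j [tj Dj]; apply: iu; split => //; split.
  by apply: (subM hK); [apply: (subV hK); exact: tK | ].
by have := subM hD Dj (subV hD Dk); rewrite invM invK -mulA mulKVg.
Qed.

Lemma prodset_subgroup H K D : subgroup H -> subgroup K -> K `<=` H ->
  normal_sub mul inv one D H -> subgroup (prodset K D).
Proof.
move=> hH hK KH [hD DH nD]; split.
- by exists one; split; [exact: (sub1 hK) | rewrite inv1 mul1g; exact: (sub1 hD)].
- move=> g1 g2 [k1 [K1 D1]] [k2 [K2 D2]].
  exists (mul k1 k2); split; first exact: (subM hK).
  have -> : mul (inv (mul k1 k2)) (mul g1 g2) =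
      mul (mul (inv k2) (mul (mul (inv k1) g1) k2)) (mul (inv k2) g2).
    by rewrite invM !mulA mulgK.
  by apply: (subM hD) => //; apply: nD => //; exact: KH.
- move=> g [k [Kk Dk]]; exists (inv k); split; first exact: (subV hK).
  have -> : mul (inv (inv k)) (inv g) =
      mul (inv (inv k)) (mul (inv (mul (inv k) g)) (inv k)).
    by rewrite invK invM invK !mulA mulgK.
  apply: nD; first by apply: (subV hH); exact: KH.
  exact: (subV hD).
Qed.

(* The index computation behind pi(K) <= pi(H): if K <= H, D is a normal
   subgroup of finite index of H and U <= K contains K :&: D, then [K : U]
   divides [H : D]. *)
Lemma index_dvd_normal H K D U n m :
  subgroup H -> subgroup K -> subgroup U -> K `<=` H -> U `<=` K ->
  normal_sub mul inv one D H -> K `&` D `<=` U ->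
  idx K U n -> idx H D m -> n %| m.
Proof.
move=> hH hK hU KH UK nD KDU idxn idxm.
have [hD DH _] := nD.
have hKD : subgroup (K `&` D) by exact: subgroupI.
have [b idxb] := finite_index_restrict hK hD KH (ex_intro _ m idxm).
have [b' idxb'] := finite_index_restrict hU hKD UK (ex_intro _ b idxb).
have eUKD : U `&` (K `&` D) = K `&` D.
  by apply/seteqP; split => g; [case | move=> hg; split => //; exact: KDU].
rewrite eUKD in idxb'.
have eb : b = n * b' := index_unique hKD idxb (index_mul hK hU hKD KDU UK idxn idxb').
have hE := prodset_subgroup hH hK KH nD.
have DE : D `<=` prodset K D.
  by move=> g Dg; exists one; split; [exact: (sub1 hK) | rewrite inv1 mul1g].
have EH : prodset K D `<=` H.
  move=> g [k [Kk Dk]]; rewrite -(mulKVg k g); apply: (subM hH); first exact: KH.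
  exact: DH.
have [a idxa] : fin_index H (prodset K D).
  case: idxm => s [sm [sH su]]; apply: (@finite_index_cover_seq H _ s) => // g Hg.
  by have [j [[js hj] _]] := su g Hg; exists j; split => //; exact: DE.
have := index_mul hH hE hD DE EH idxa (index_prodset hK hD idxb).
move=> /(index_unique hD idxm) ->.
by rewrite eb; apply: dvdn_mull; exact: dvdn_mulr.
Qed.

(* A pointed copy of G, needed to use the open-cover characterization of
   compactness. *)
Definition pointedG : Type := G.
HB.instance Definition _ := Topological.on pointedG.
HB.instance Definition _ := isPointed.Build pointedG one.

Lemma compact_finite_cover (A : set G) : compact A -> cover_compact A.
Proof. by move=> cA; have : @compact pointedG A by []; rewrite compact_cover. Qed.

Let G_compact : compact [set: G]. Proof. by case: hG. Qed.
Let G_hausdorff : hausdorff_space G. Proof. by case: hG. Qed.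
Let G_totally_disconnected : totally_disconnected [set: G]. Proof. by case: hG. Qed.
Let mul_continuous : continuous (fun p : G * G => mul p.1 p.2).
Proof. by case: hG => _ []. Qed.
Let inv_continuous : continuous inv. Proof. by case: hG => _ []. Qed.
Let id_continuous : continuous (fun g : G => g). Proof. by move=> g. Qed.

Lemma continuous_mulf (u v : G -> G) : continuous u -> continuous v ->
  continuous (fun g => mul (u g) (v g)).
Proof.
move=> cu cv x; apply: (@continuous2_cvg _ _ _ _ _ _ u v mul) => //.
- exact: (@mul_continuous (u x, v x)).
- exact: cu.
- exact: cv.
Qed.

Lemma continuous_invf (u : G -> G) : continuous u -> continuous (fun g => inv (u g)).
Proof. by move=> cu x; apply: continuous_comp; [exact: cu | exact: inv_continuous]. Qed.

Lemma open_preimage (u : G -> G) (O : set G) :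
  continuous u -> open O -> open [set g | O (u g)].
Proof. by move=> cu oO; apply: (@open_comp _ _ u O) => // x _; exact: cu. Qed.

Lemma continuous_conj (a b : G) : continuous (fun g => mul a (mul g b)).
Proof.
apply: continuous_mulf; first exact: cst_continuous.
by apply: continuous_mulf => //; exact: cst_continuous.
Qed.

Lemma nbhs_pair_split (w b : G) (P : set (G * G)) : nbhs (w, b) P ->
  exists A B, [/\ open A, A w, open B, B b & forall a c, A a -> B c -> P (a, c)].
Proof.
case=> [[A0 B0] /= [nA nB] sP]; exists A0°, B0°; split.
- exact: open_interior.
- exact: nA.
- exact: open_interior.
- exact: nB.
- by move=> a c /interior_subset ha /interior_subset hc; exact: sP.
Qed.

Lemma translates_cover (H O : set G) : compact H -> open O -> O one ->
  exists r : seq G, (forall i, i < size r -> H (nth one r i)) /\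
    forall h, H h -> exists i, i < size r /\ O (mul (inv (nth one r i)) h).
Proof.
move=> /compact_finite_cover cH oO O1.
have [g _|h Hh|D' sD cov] := cH G H (fun g => [set y | O (mul (inv g) y)]).
- by apply: open_preimage oO; apply: continuous_mulf => //; exact: cst_continuous.
- by exists h => //=; rewrite mulVg.
exists (D' : seq G); split.
  by move=> i hi; have := sD (nth one D' i) (mem_nth one hi); rewrite inE.
by move=> h /cov [g /= gD hg]; exists (index g D'); rewrite index_mem nth_index.
Qed.

Lemma clopen_right_stable (W : set G) : clopen W ->
  exists N, nbhs one N /\ forall w n, W w -> N n -> W (mul w n).
Proof.
move=> [oW cW].
have /choice [AB hAB] : forall w, exists AB : set G * set G,
    W w -> [/\ open AB.1, AB.1 w, open AB.2, AB.2 one &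
            forall a c, AB.1 a -> AB.2 c -> W (mul a c)].
  move=> w; have [Ww|nW] := pselect (W w); last by exists (setT, setT).
  have : nbhs (w, one) [set p : G * G | W (mul p.1 p.2)].
    apply: (@mul_continuous (w, one)); apply: open_nbhs_nbhs; split => //=.
    by rewrite mulg1.
  by case/nbhs_pair_split => A [B [oA Aw oB B1 h]]; exists (A, B).
have cptW : compact W by exact: (subclosed_compact cW G_compact).
have op0 : forall w, W w -> open (AB w).1 by move=> w /hAB [].
have cov0 : W `<=` cover W (fun w => (AB w).1).
  by move=> w Ww; exists w => //; case: (hAB w Ww).
have [D' sD cov] := compact_finite_cover cptW op0 cov0.
exists (\bigcap_(w in [set` D']) (AB w).2); split.
  apply: filter_bigI => w wD; have Ww : W w by have := sD w wD; rewrite inE.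
  by have [_ _ o h _] := hAB w Ww; exact: open_nbhs_nbhs.
move=> w n Ww Nn; have [v vD hv] := cov w Ww.
have Wv : W v by have := sD v vD; rewrite inE.
by have [_ _ _ _ h] := hAB v Wv; apply: h => //; exact: Nn.
Qed.

(* Every neighbourhood of one in a profinite group contains an open subgroup:
   the right stabilizer of a clopen neighbourhood of one inside it. *)
Lemma open_subgroup_sub (O : set G) : open O -> O one ->
  exists V, [/\ open V, subgroup V & V `<=` O].
Proof.
move=> oO O1.
have [W [clW W1 WO]] := clopen_nbhs_sub G_compact G_hausdorff G_totally_disconnected oO O1.
have [N [nN WN]] := clopen_right_stable clW.
pose N2 := N° `&` [set g | N° (inv g)].
have oN2 : open N2.
  apply: openI; first exact: open_interior.
  by apply: open_preimage; [exact: continuous_invf | exact: open_interior].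
have N2V : forall n, N2 n -> N2 (inv n) by move=> n [h1 h2]; split => //=; rewrite invK.
have WN2 : forall w n, W w -> N2 n -> W (mul w n).
  by move=> w n Ww [/interior_subset h _]; exact: WN.
pose V := [set g | (forall w, W w -> W (mul w g)) /\
                   (forall w, W w -> W (mul w (inv g)))].
have hV : subgroup V.
  split.
  - by split => w Ww; rewrite ?inv1 mulg1.
  - move=> g h [g1 g2] [h1 h2]; split => w Ww.
      by rewrite mulA; apply: h1; exact: g1.
    by rewrite invM mulA; apply: g2; exact: h2.
  - by move=> g [g1 g2]; split => //; rewrite invK.
exists V; split => //; last by move=> g [h _]; apply: WO; rewrite -(mul1g g); exact: h.
have -> : V = \bigcup_(v in V) [set g | N2 (mul (inv v) g)].
  apply/seteqP; split => [v Vv|g [v [v1 v2] /= hn]].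
    exists v => //=; rewrite mulVg; split; [exact: nN | rewrite /= inv1; exact: nN].
  split => w Ww.
    by rewrite -(mulKVg v g) mulA; apply: WN2 => //; exact: v1.
  rewrite -(mulKVg v g) invM mulA; apply: v2; apply: WN2 => //; exact: N2V.
apply: bigcup_open => v _; apply: open_preimage oN2.
by apply: continuous_mulf => //; exact: cst_continuous.
Qed.

Lemma closure_subgroup S : subgroup S -> subgroup (closure S).
Proof.
move=> hS; split.
- by apply: subset_closure; exact: sub1.
- move=> x y cx cy N nN.
  have : nbhs (x, y) [set p : G * G | N (mul p.1 p.2)] by exact: (@mul_continuous (x, y)).
  case/nbhs_pair_split => A [B [oA Ax oB By h]].
  have [a [Sa Aa]] := cx A (open_nbhs_nbhs (conj oA Ax)).
  have [c [Sc Bc]] := cy B (open_nbhs_nbhs (conj oB By)).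
  by exists (mul a c); split; [exact: subM | exact: h].
- move=> x cx N nN.
  have : nbhs x [set g | N (inv g)] by exact: (@inv_continuous x).
  by move=> /cx [a [Sa Na]]; exists (inv a); split => //; exact: subV.
Qed.

Local Notation pw h n := (iter n (mul h) one).

Lemma pwD h m n : pw h (m + n) = mul (pw h m) (pw h n).
Proof.
elim: m => [|m IH]; first by rewrite add0n /= mul1g.
by rewrite addSn /= IH mulA.
Qed.

Lemma cyc_subgroup h : subgroup (cyc mul inv one h).
Proof.
have mix m n : exists k, mul (pw h m) (inv (pw h n)) = pw h k \/
                         mul (pw h m) (inv (pw h n)) = inv (pw h k).
  have [le|lt] := leqP n m.
    by exists (m - n); left; rewrite -{1}(subnK le) pwD mulgK.
  exists (n - m); right.
  by rewrite -{1}(subnK (ltnW lt)) pwD invM mulA mulgV mul1g.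
split.
- by exists 0; left.
- move=> x y [m [-> | ->]] [n [-> | ->]].
  + by exists (m + n); left; rewrite pwD.
  + by have [k hk] := mix m n; exists k.
  + have [k hk] := mix n m; exists k.
    suff -> : mul (inv (pw h m)) (pw h n) = mul (pw h n) (inv (pw h m)) by [].
    by apply: (@mulgI (pw h m)); rewrite mulKVg mulA -pwD addnC pwD mulgK.
  + by exists (n + m); right; rewrite pwD invM.
- by move=> x [m [-> | ->]]; exists m; [right | left] => //; rewrite invK.
Qed.

Lemma cyc_sub H h : subgroup H -> H h -> cyc mul inv one h `<=` H.
Proof.
move=> hH Hh; have pH n : H (pw h n).
  by elim: n => [|n IH]; [exact: sub1 | rewrite /=; exact: subM].
by move=> z [n [-> | ->]]; [exact: (pH n) | apply: (subV hH); exact: (pH n)].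
Qed.

Definition conj_core (V : set G) (r : seq G) :=
  [set g | forall i, i < size r -> V (mul (inv (nth one r i)) (mul g (nth one r i)))].

Lemma open_conj_core (V : set G) (r : seq G) : open V -> open (conj_core V r).
Proof.
move=> oV; elim: r => [|x r IH].
  have -> : conj_core V [::] = setT by apply/seteqP; split => // g _ i.
  exact: openT.
have -> : conj_core V (x :: r) = [set g | V (mul (inv x) (mul g x))] `&` conj_core V r.
  apply/seteqP; split => g.
    by move=> h; split; [exact: (h 0) | move=> i hi; exact: (h i.+1)].
  by move=> [h1 h2] [|i] //= hi; exact: h2.
by apply: openI => //; apply: open_preimage => //; exact: continuous_conj.
Qed.

Lemma conj_core_normal H V r : subgroup H -> subgroup V ->
  (forall i, i < size r -> H (nth one r i)) ->
  (forall h, H h -> exists i, i < size r /\ V (mul (inv (nth one r i)) h)) ->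
  normal_sub mul inv one (H `&` conj_core V r) H /\ H `&` conj_core V r `<=` V.
Proof.
move=> hH hV rH rcov.
have conjV g k : (H `&` conj_core V r) g -> H k -> V (mul (inv k) (mul g k)).
  move=> [Hg Vg] Hk; have [i [ir hi]] := rcov k Hk.
  set v := mul (inv (nth one r i)) k in hi.
  have -> : k = mul (nth one r i) v by rewrite /v mulKVg.
  have := subM hV (subM hV (subV hV hi) (Vg i ir)) hi.
  by rewrite !invM !mulA.
split; last first.
  by move=> g Dg; have := conjV g one Dg (sub1 hH); rewrite inv1 mul1g mulg1.
split => //; first split.
- split; first exact: (sub1 hH).
  by move=> i ir; rewrite mul1g mulVg; exact: sub1.
- move=> a b [Ha Va] [Hb Vb]; split; first exact: (subM hH).
  by move=> i ir; have := subM hV (Va i ir) (Vb i ir); rewrite !mulA mulgK.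
- move=> a [Ha Va]; split; first exact: (subV hH).
  by move=> i ir; have := subV hV (Va i ir); rewrite !invM invK mulA.
- move=> k g Hk Dg; split.
    by apply: (subM hH); [exact: (subV hH) | apply: (subM hH) => //; case: Dg].
  move=> i ir; have := conjV g (mul k (nth one r i)) Dg (subM hH Hk (rH i ir)).
  by rewrite !invM !mulA.
Qed.

Lemma open_normal_subgroup_in (H O : set G) : subgroup H -> closed H ->
  open O -> O one -> exists D, [/\ open D, normal_sub mul inv one (H `&` D) H,
                                  H `&` D `<=` O & fin_index H (H `&` D)].
Proof.
move=> hH cH oO O1.
have [V [oV hV VO]] := open_subgroup_sub oO O1.
have cptH : compact H by exact: (subclosed_compact cH G_compact).
have [r [rH rcov]] := translates_cover cptH oV (sub1 hV).
have [nD DV] := conj_core_normal hH hV rH rcov.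
exists (conj_core V r); split => //; first exact: open_conj_core.
  exact: subset_trans DV VO.
have Dcore1 : conj_core V r one by move=> i ir; rewrite mul1g mulVg; exact: sub1.
have [r' [r'H r'cov]] := translates_cover cptH (open_conj_core r oV) Dcore1.
have [hD _ _] := nD.
apply: (finite_index_cover_seq hD r'H) => g Hg; have [j [jr hj]] := r'cov g Hg.
exists j; split => //; split => //.
by apply: (subM hH) => //; apply: (subV hH); exact: r'H.
Qed.

Lemma pi_elt_sub (H : set G) (h : G) p : closed_subgroup mul inv one H -> H h ->
  pi_elt mul inv one h p -> pi_set mul inv one H p.
Proof.
move=> [hH cH] Hh [pp [U [[O [oO eU]] [hU UK _] [n [idxn pn]]]]].
set K := closure (cyc mul inv one h) in eU UK idxn.
have hK : subgroup K by apply: closure_subgroup; exact: cyc_subgroup.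
have KH : K `<=` H.
  by rewrite (closure_id H).1 //; apply: closureS; exact: cyc_sub.
have O1 : O one by have := sub1 hU; rewrite eU => -[].
have [D [oD nD DO [m idxm]]] := open_normal_subgroup_in hH cH oO O1.
split => //; exists (H `&` D); split; [by exists D | exact: nD | exists m; split => //].
apply: (dvdn_trans pn); apply: (index_dvd_normal hH hK hU KH UK nD _ idxn idxm).
by move=> g [Kg HDg]; rewrite eU; split => //; exact: DO.
Qed.

Lemma centralizer_subgroup H x : subgroup H -> subgroup (centralizer_in mul H x).
Proof.
move=> hH; split.
- by split; [exact: sub1 | rewrite mul1g mulg1].
- move=> a b [Ha ea] [Hb eb]; split; first exact: (subM hH).
  by rewrite -mulA eb mulA ea -mulA.
- move=> a [Ha ea]; split; first exact: (subV hH).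
  have := congr1 (fun y => mul (inv a) (mul y (inv a))) ea.
  by rewrite /= mulgK -mulA mulKg => ->.
Qed.

Definition comm_map (x h : G) := comm mul inv (inv h) x.

Lemma comm_map_continuous x : continuous (comm_map x).
Proof.
have -> : comm_map x = fun h => mul h (mul (inv x) (mul (inv h) x)).
  by apply: funext => h; rewrite /comm_map /comm invK.
apply: continuous_mulf => //; apply: continuous_mulf; first exact: cst_continuous.
by apply: continuous_mulf; [exact: continuous_invf | exact: cst_continuous].
Qed.

Lemma comm_map_eq x a b :
  comm_map x a = comm_map x b -> mul (mul (inv b) a) x = mul x (mul (inv b) a).
Proof.
rewrite /comm_map /comm !invK => e.
have e1 : mul a (mul (inv x) (inv a)) = mul b (mul (inv x) (inv b)).
  by apply: (@mulIg x); rewrite -!mulA.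
set c := mul (inv b) a.
have e2 : mul c (inv x) = mul (inv x) c.
  have := congr1 (fun y => mul (inv b) (mul y a)) e1.
  by rewrite /= /c !mulA mulgKV mulVg mul1g.
have := congr1 (fun y => mul x (mul y x)) e2.
by rewrite /= mulgKV (mulA x (mul (inv x) c) x) mulKVg => ->.
Qed.

(* If the commutator map has an isolated value on H, then C_H(x) has finite
   index in H: finitely many translates of an isolating neighbourhood cover H,
   and each translate lies in one coset of C_H(x). *)
Lemma isolated_comm_finite_index x H h0 N : subgroup H -> compact H -> H h0 ->
  nbhs (comm_map x h0) N ->
  (forall h, H h -> N (comm_map x h) -> comm_map x h = comm_map x h0) ->
  fin_index H (centralizer_in mul H x).
Proof.
move=> hH cptH Hh0 nN iso.
have oP : open [set u | N° (comm_map x (mul h0 u))].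
  apply: open_preimage; last exact: open_interior.
  have cm : continuous (mul h0) by apply: continuous_mulf => //; exact: cst_continuous.
  by move=> u; apply: continuous_comp; [exact: cm | exact: comm_map_continuous].
have P1 : N° (comm_map x (mul h0 one)) by rewrite mulg1; exact: nN.
have [r [rH rcov]] := translates_cover cptH oP P1.
apply: (finite_index_cover_seq (centralizer_subgroup x hH) rH) => h Hh.
have [i [ir hi]] := rcov h Hh; exists i; split => //.
have Hu : H (mul (inv (nth one r i)) h) := subM hH (subV hH (rH i ir)) Hh.
split => //; have := comm_map_eq (iso _ (subM hH Hh0 Hu) (interior_subset hi)).
by rewrite mulKg.
Qed.

(* Under the cardinality hypothesis, the commutator map has an isolated value
   on H: otherwise its compact image, made of coprime commutators, would be a
   perfect set, hence of the cardinality of the continuum. *)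
Lemma comm_map_isolated x H :
  ~ ([set: nat -> bool] #<= coprime_commutators mul inv one) ->
  closed_subgroup mul inv one H ->
  (forall p, ~ (pi_elt mul inv one x p /\ pi_set mul inv one H p)) ->
  exists h0 N, [/\ H h0, nbhs (comm_map x h0) N &
    forall h, H h -> N (comm_map x h) -> comm_map x h = comm_map x h0].
Proof.
move=> hcard hH hpi; have [hHs cH] := hH.
set S := comm_map x @` H.
have Scc : S `<=` coprime_commutators mul inv one.
  move=> z [h Hh <-]; exists (inv h), x; split => // p [p1 p2].
  by apply: (hpi p); split => //; exact: (pi_elt_sub hH (subV hHs Hh) p1).
have cS : compact S.
  apply: continuous_compact; last exact: (subclosed_compact cH G_compact).
  by apply: continuous_subspaceT => h; exact: comm_map_continuous.
have [perf|] := pselect (S `<=` limit_point S).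
  case: hcard; apply: card_le_trans (subset_card_le Scc).
  apply: (perfect_card G_compact G_hausdorff cS perf).
  by exists (comm_map x one); exists one => //; exact: (sub1 hHs).
move=> /existsNP [z /not_implyP [[h0 Hh0 <-]]] /existsNP [N /not_implyP [nN noN]].
exists h0, N; split => // h Hh Nh; apply: contrapT => ne.
by apply: noN; exists (comm_map x h); split => //; [exact/eqP | exists h].
Qed.
End ProfiniteGroup.

Theorem lemma2p2 (G : topologicalType) (mul : G -> G -> G) (inv : G -> G) (one : G)
  (hG : is_profinite_group mul inv one)
  (hcard : ~ ([set: nat -> bool] #<= coprime_commutators mul inv one))
  (x : G) (H : set G) (hH : closed_subgroup mul inv one H)
  (hpi : forall p : nat, ~ (pi_elt mul inv one x p /\ pi_set mul inv one H p)) :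
  finite_index mul inv one H (centralizer_in mul H x).
Proof.
have [hHs cH] := hH.
have cptH : compact H by apply: (@subclosed_compact _ H setT cH) => //; case: hG.
have [h0 [N [Hh0 nN iso]]] := comm_map_isolated hG hcard hH hpi.
exact: (isolated_comm_finite_index hG hHs cptH Hh0 nN iso).
Qed.
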